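(* Let $\pi_1,\dots,\pi_m$ be permutations and $t_1,\dots,t_m$ reals such that $\sum_{i\in[m]}t_iP_{\pi_i}=0$, and let $k=\max\{|\pi_1|,\dots,|\pi_m|\}$. Suppose that $\pi_1,\dots,\pi_n$ are exactly those among $\pi_1,\dots,\pi_m$ that have order $k$. Let $h$ be an integer with $2\le h\le k$ such that each of the remaining permutations $\pi_{n+1},\dots,\pi_m$ has order at most $h-1$. Let $\omega=t_1\pi_1+\dots+t_n\pi_n$. Then $$\mathrm{Cov}(\omega)\,\mathbf{b}_h=(0,\dots,0)^T\quad\text{and}\quad \mathbf{b}_h^T\,\mathrm{Cov}(\omega)=(0,\dots,0).$$
   Context: A $k$-permutation is a bijection of $[k]=\{1,\dots,k\}$; $|\pi|$ denotes the order. The gradient polynomial of a $k$-permutation $\pi$ is $P_\pi(\alpha,\beta)=k!\sum_{m\in[k]}\left(\frac{k-m}{1-\alpha}-\frac{m-1}{\alpha}\right)\left(\frac{k-\pi(m)}{1-\beta}-\frac{\pi(m)-1}{\beta}\right)\frac{\alpha^{m-1}(1-\alpha)^{k-m}\beta^{\pi(m)-1}(1-\beta)^{k-\pi(m)}}{(m-1)!(k-m)!(\pi(m)-1)!(k-\pi(m))!}$. The permutation matrix $A_\pi\in\mathbb{R}^{k\times k}$ has $(A_\pi)_{i,j}=1$ if $\pi(i)=j$ and $0$ otherwise. For a formal real linear combination $\omega=\sum_i t_i\pi_i$ of $k$-permutations, its cover matrix is $\mathrm{Cov}(\omega)=\sum_i t_iA_{\pi_i}\in\mathbb{R}^{k\times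 k}$. For $a\in[k]$, $\mathbf{b}_a=\mathbf{b}^k_a\in\mathbb{R}^k$ is the column vector with $(\mathbf{b}_a)_\ell=(-1)^{\ell-1}\binom{a-1}{\ell-1}$ for $1\le\ell\le a$ and $0$ for $\ell>a$. *)

From HB Require Import structures.
From mathcomp Require Import all_boot all_order fingroup perm all_algebra.
From mathcomp Require Import reals.
Set Implicit Arguments. Unset Strict Implicit. Unset Printing Implicit Defensive.
Import Order.TTheory GRing.Theory Num.Theory.
Local Open Scope ring_scope.

(* Indices are 0-based: position a : 'I_k stands for a+1 in [k]. *)

(* Gradient polynomial P_pi(alpha,beta) of a k-permutation pi, written
   literally (with m = a+1, pi(m) = p a + 1). *)
Definition gradP (R : realType) (k : nat) (p : 'S_k) (al be : R) : R :=
  (k`!)%:R * \sum_(a < k)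
    ((((k - a.+1)%N)%:R / (1 - al) - (a : nat)%:R / al) *
     (((k - (p a).+1)%N)%:R / (1 - be) - (p a : nat)%:R / be) *
     (al ^+ a * (1 - al) ^+ (k - a.+1) * be ^+ (p a) * (1 - be) ^+ (k - (p a).+1))
     / ((a`!)%:R * ((k - a.+1)`!)%:R * ((p a)`!)%:R * ((k - (p a).+1)`!)%:R)).

(* Permutation matrix of a k-permutation p, placed in a K x K matrix:
   entry (i,j) is 1 iff i = a and j = p a for some a < k.  When k = K this
   is exactly A_p ((A_p)_{i,j} = 1 iff p(i) = j). *)
Definition permMx (R : realType) (K k : nat) (p : 'S_k) : 'M[R]_K :=
  \matrix_(i < K, j < K) ([exists a : 'I_k, (val a == val i) && (val (p a) == val j)]%:R).

Definition covMx (R : realType) (K m n : nat) (ks : 'I_m -> nat)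
    (pis : forall i : 'I_m, 'S_(ks i)) (t : 'I_m -> R) : 'M[R]_K :=
  \sum_(i < m | (i < n)%N) t i *: permMx R K (pis i).

Definition bvec (R : realType) (K h : nat) : 'cV[R]_K :=
  \col_(l < K) (if (l < h)%N then (-1) ^+ l * ('C(h.-1, l))%:R else 0).

Definition maxord (m : nat) (ks : 'I_m -> nat) : nat := \big[maxn/0%N]_(j < m) ks j.

From HB Require Import structures.
From mathcomp Require Import all_boot all_order fingroup perm all_algebra.
From mathcomp Require Import reals.
From mathcomp Require Import ring lra zify.
Set Implicit Arguments.
Unset Strict Implicit.
Unset Printing Implicit Defensive.

(* Each summand of P_pi factors through the polynomials
     D_{k,j}(x) = -(x^j (1-x)^(k-1-j))' / (j! (k-1-j)!),
   namely P_pi(a,b) = k! sum_m D_{k,m}(a) D_{k,pi(m)}(b), so the hypothesis makes every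
   coefficient of the bivariate polynomial sum_i t_i k_i! sum_m D_{k_i,m}(x) D_{k_i,pi_i(m)}(y)
   vanish.  D_{k,j} has degree k-2 and, for l <= k-2, its coefficient of x^l is a nonzero
   constant times (-1)^j C(l+1,j).  Hence the coefficient of x^(h-2) y^(r-1) does not see the
   permutations of order < h and reads b_h^T Cov(omega) c_r = 0 for 0 < r < k, where
   c_r = ((-1)^j C(r,j))_j; symmetrically x^(r-1) y^(h-2) gives c_r^T Cov(omega) b_h = 0.
   The entries of b_h sum to 0, so b_h^T Cov(omega) and Cov(omega) b_h are also orthogonal to
   the all-ones vector, and c_1, ..., c_(k-1) together with it span R^k (the c_r form a
   triangular system). *)

Import Order.TTheory GRing.Theory Num.Theory.
Local Open Scope ring_scope.

Section SignedBinomial.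
Variable R : numFieldType.

Definition sbin (r j : nat) : R := (-1) ^+ j * ('C(r, j))%:R.

Lemma sbin_small r j : (r < j)%N -> sbin r j = 0.
Proof. by move=> ltrj; rewrite /sbin bin_small ?mulr0. Qed.

Lemma sum_sbin r K : (0 < r < K)%N -> \sum_(j < K) sbin r j = 0.
Proof.
case/andP=> r_gt0 ltrK.
rewrite -(big_mkord xpredT) (big_cat_nat (n := r.+1)) //= [X in _ + X]big_nat_cond.
rewrite [X in _ + X]big1 ?addr0; last by move=> j /andP[/andP[ltrj _] _]; exact: sbin_small.
have := exprDn (1 : R) (-1) r; rewrite subrr expr0n gtn_eqF // mulr0n => binom0.
rewrite big_mkord [RHS]binom0; apply: eq_bigr => j _.
by rewrite expr1n mul1r /sbin mulr_natr.
Qed.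

Lemma coef_1subX c i : ((1 - 'X : {poly R}) ^+ c)`_i = sbin c i.
Proof.
elim: c i => [|c IHc] [|i].
- by rewrite expr0 coef1 /sbin mulr1.
- by rewrite expr0 coef1 sbin_small.
- by rewrite exprSr mulrBr mulr1 coefB mulrC coefXM IHc subr0 /sbin !bin0.
rewrite exprSr mulrBr mulr1 coefB mulrC coefXM /= !IHc /sbin binS natrD exprS.
ring.
Qed.

Lemma sbin_triangular K (z : 'I_K -> R) :
  (forall r : 'I_K, \sum_(a < K) z a * sbin r a = 0) -> forall a, z a = 0.
Proof.
move=> z_orth; suff: forall i (a : 'I_K), a = i :> nat -> z a = 0 by move=> + a; apply.
elim/ltn_ind=> i IH a ai; have := z_orth a.
rewrite (bigD1 a) //= big1 ?addr0 => [|b neq_ba]; last first.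
  case: (ltngtP b a) => [ltba|ltab|eqba]; last by rewrite (val_inj eqba) eqxx in neq_ba.
  - by rewrite (IH b) ?mul0r // -ai.
  - by rewrite sbin_small ?mulr0.
by move/eqP; rewrite /sbin binn mulr1 mulf_eq0 signr_eq0 orbF => /eqP.
Qed.

Lemma sbin_orthogonal_eq0 K (y : 'I_K -> R) :
  (forall r, (0 < r < K)%N -> \sum_(a < K) y a * sbin r a = 0) ->
  \sum_(a < K) y a = 0 -> forall a, y a = 0.
Proof.
move=> y_orth sum_y0; case: K y y_orth sum_y0 => [|K] y y_orth sum_y0 a; first by case: a.
pose y0 := y ord0.
suff const_y b : y b = y0.
  move: sum_y0; under eq_bigr do rewrite const_y.
  by rewrite sumr_const card_ord => /eqP; rewrite mulrn_eq0 /= const_y => /eqP.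
(* Subtracting y0 turns the all-ones condition into the missing row r = 0. *)
apply/eqP; rewrite -subr_eq0; apply/eqP; move: b.
apply: (@sbin_triangular K.+1 (fun b => y b - y0)) => r.
have [r0|r_gt0] := posnP r.
  rewrite (bigD1 ord0) //= big1 ?addr0 ?subrr ?mul0r // => b nz_b.
  by rewrite r0 sbin_small ?mulr0 // lt0n.
under eq_bigr do rewrite mulrBl.
by rewrite sumrB -mulr_sumr y_orth ?r_gt0 ?ltn_ord // sum_sbin ?r_gt0 ?ltn_ord // mulr0 subrr.
Qed.

End SignedBinomial.

Section PolynomialsOnTheUnitInterval.
Variable R : numFieldType.

Lemma poly_eq0_on01 (q : {poly R}) : (forall x, 0 < x < 1 -> q.[x] = 0) -> q = 0.
Proof.
move=> q0; apply/eqP; apply: contraT => nz_q.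
pose xs := [seq (i.+2%:R : R)^-1 | i <- iota 0 (size q)].
have xs_roots : all (root q) xs.
  apply/allP => _ /mapP[i _ ->]; apply/rootP/q0.
  by rewrite invr_gt0 ltr0n /= invf_lt1 ?ltr0n // ltr1n.
have xs_uniq : uniq xs.
  rewrite map_inj_uniq ?iota_uniq // => i j /invr_inj /eqP.
  by rewrite eqr_nat => /eqP [].
by have := max_poly_roots nz_q xs_roots xs_uniq; rewrite size_map size_iota ltnn.
Qed.

Lemma coef_sum_mul_eq0 (I : finType) (p q : I -> {poly R}) :
  (forall x y, 0 < x < 1 -> 0 < y < 1 -> \sum_s (p s).[x] * (q s).[y] = 0) ->
  forall i j, \sum_s (p s)`_i * (q s)`_j = 0.
Proof.
move=> pq0 i j.
have coef_p_eq0 y : 0 < y < 1 -> \sum_s (p s)`_i * (q s).[y] = 0.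
  move=> y01; rewrite -[RHS](coef0 _ i) -(@poly_eq0_on01 (\sum_s (q s).[y] *: p s)).
    by rewrite coef_sum; apply: eq_bigr => s _; rewrite coefZ mulrC.
  move=> x x01; rewrite -[RHS](pq0 x y) // horner_sum; apply: eq_bigr => s _.
  by rewrite hornerZ mulrC.
rewrite -[RHS](coef0 _ j) -(@poly_eq0_on01 (\sum_s (p s)`_i *: q s)).
  by rewrite coef_sum; apply: eq_bigr => s _; rewrite coefZ.
move=> y y01; rewrite -[RHS](coef_p_eq0 y) // horner_sum; apply: eq_bigr => s _.
by rewrite hornerZ.
Qed.

End PolynomialsOnTheUnitInterval.

Section GradientFactor.
Variable R : numFieldType.

Lemma natr_fact_neq0 n : n`!%:R != 0 :> R.
Proof. by rewrite pnatr_eq0 -lt0n fact_gt0. Qed.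

Lemma natr_bin n m : (m <= n)%N -> 'C(n, m)%:R = n`!%:R / (m`! * (n - m)`!)%:R :> R.
Proof.
by move=> lemn; rewrite -(bin_fact lemn) natrM mulfK // natrM mulf_neq0 ?natr_fact_neq0.
Qed.

Lemma mulrn_expr_pred (x : R) n : x != 0 -> x ^+ n.-1 *+ n = n%:R / x * x ^+ n.
Proof. by case: n => [|n] x0; rewrite ?mul0r // exprS -mulr_natl; field. Qed.

Definition dbern (k j : nat) : {poly R} :=
  - (j`! * (k - j.+1)`!)%:R^-1 *: ('X^j * (1 - 'X) ^+ (k - j.+1))^`().

Definition dbern_scale (k l : nat) : R := (-1) ^+ l / (l`! * (k - l.+2)`!)%:R.

Lemma dbern_scale_neq0 k l : dbern_scale k l != 0.
Proof. by rewrite mulf_neq0 ?signr_eq0 // invr_eq0 natrM mulf_neq0 ?natr_fact_neq0. Qed.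

Lemma horner_dbern k j (x : R) : x != 0 -> 1 - x != 0 ->
  (dbern k j).[x] = ((k - j.+1)%:R / (1 - x) - j%:R / x) *
                    (x ^+ j * (1 - x) ^+ (k - j.+1)) / (j`! * (k - j.+1)`!)%:R.
Proof.
move=> x0 x1; rewrite /dbern hornerZ derivM derivXn deriv_exp derivB derivX derivC.
rewrite !(hornerE, hornerMn) /= mulN1r mulNrn !mulrn_expr_pred //.
by field; rewrite !natr_fact_neq0 x0 x1.
Qed.

Lemma coef_dbern_high k j l : (j < k)%N -> (k <= l.+1)%N -> (dbern k j)`_l = 0.
Proof.
move=> ltjk lekl; rewrite coefZ coef_deriv coefXnM coef_1subX.
by case: ltnP => lejl; rewrite ?sbin_small ?mul0rn ?mulr0 //; lia.
Qed.

Lemma coef_dbern k j l : (l.+2 <= k)%N -> (dbern k j)`_l = dbern_scale k l * sbin R l.+1 j.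
Proof.
move=> lelk; rewrite coefZ coef_deriv coefXnM coef_1subX /dbern_scale.
case: ltnP => [ltlj|lejl]; first by rewrite sbin_small ?mul0rn ?mulr0.
have lesc : (l.+1 - j <= k - j.+1)%N by lia.
rewrite /sbin !natr_bin // (_ : k - j.+1 - (l.+1 - j) = k - l.+2)%N; last by lia.
rewrite (exprB lejl) ?unitrN1 // invr_sign factS -mulr_natr !natrM exprS.
by field; rewrite !natr_fact_neq0.
Qed.

End GradientFactor.

Section Matrices.
Variable R : realType.

Lemma gradP_dbern k (p : 'S_k) (al be : R) : 0 < al < 1 -> 0 < be < 1 ->
  gradP p al be = k`!%:R * \sum_(a < k) (dbern R k a).[al] * (dbern R k (p a)).[be].
Proof.
move=> /andP[al0 al1] /andP[be0 be1].
congr (_ * _); apply: eq_bigr => a _; rewrite !horner_dbern ?subr_eq0 ?gt_eqF //.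
by field; rewrite !natr_fact_neq0 !subr_eq0 !gt_eqF.
Qed.

Lemma permMxE k (p : 'S_k) (i j : 'I_k) : permMx R k p i j = (p i == j)%:R.
Proof.
rewrite mxE; congr ((nat_of_bool _)%:R); apply/existsP/eqP => [[a]|<-].
  by case/andP=> /eqP/val_inj-> /eqP/val_inj.
by exists i; rewrite !eqxx.
Qed.

Lemma permMx_bilin k K (p : 'S_k) (f g : nat -> R) : k = K ->
  \sum_(l < K) \sum_(j < K) f l * permMx R K p l j * g j = \sum_(a < k) f a * g (p a).
Proof.
move=> <-; apply: eq_bigr => l _; rewrite (bigD1 (p l)) //= permMxE eqxx mulr1.
by rewrite big1 ?addr0 // => j; rewrite permMxE eq_sym => /negbTE->; rewrite mulr0 mul0r.
Qed.

Lemma bvecE K h (l : 'I_K) : (0 < h)%N -> bvec R K h l 0 = sbin R h.-1 l.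
Proof.
move=> h_gt0; rewrite mxE; case: ltnP => // le_hl.
by rewrite sbin_small //; lia.
Qed.

End Matrices.

Section CoverForm.
Variables (R : realType) (m n : nat) (ks : 'I_m -> nat).
Variables (pis : forall i : 'I_m, 'S_(ks i)) (t : 'I_m -> R).
Hypothesis grad0 : forall al be : R, 0 < al < 1 -> 0 < be < 1 ->
  \sum_(i < m) t i * gradP (pis i) al be = 0.

Lemma gradP_coef_eq0 l l' : \sum_(i < m) t i * (ks i)`!%:R *
    \sum_(a < ks i) (dbern R (ks i) a)`_l * (dbern R (ks i) (pis i a))`_l' = 0.
Proof.
pose c i := t i * (ks i)`!%:R.
have flatten (F : forall i, 'I_(ks i) -> R) : \sum_(i < m) c i * \sum_(a < ks i) F i a =
    \sum_(s : {i : 'I_m & 'I_(ks i)}) c (tag s) * F (tag s) (tagged s).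
  under eq_bigr do rewrite mulr_sumr.
  exact: (sig_big_dep xpredT (fun _ => xpredT) (fun i a => c i * F i a)).
pose P (s : {i : 'I_m & 'I_(ks i)}) := c (tag s) *: dbern R (ks (tag s)) (tagged s).
pose Q (s : {i : 'I_m & 'I_(ks i)}) := dbern R (ks (tag s)) (pis (tag s) (tagged s)).
rewrite flatten -[RHS](@coef_sum_mul_eq0 R _ P Q _ l l') => [|al be al01 be01].
  by apply: eq_bigr => s _; rewrite /P [in RHS]coefZ mulrA.
transitivity (\sum_(i < m) c i *
    \sum_(a < ks i) (dbern R (ks i) a).[al] * (dbern R (ks i) (pis i a)).[be]).
  by rewrite flatten; apply: eq_bigr => s _; rewrite /P hornerZ mulrA.
rewrite -[RHS](grad0 al01 be01); apply: eq_bigr => i _.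
by rewrite gradP_dbern // mulrA.
Qed.

(* u^T Cov(omega) v, for vectors u, v given on the 0-based indices by nat-valued functions,
   which avoids casting between 'I_(ks i) and 'I_K. *)
Definition cover_form (f g : nat -> R) : R :=
  \sum_(i < m | (i < n)%N) t i * \sum_(a < ks i) f a * g (pis i a).

Variable K : nat.
Hypothesis ksK : forall i : 'I_m, (i < n)%N -> ks i = K.

Lemma cover_form_sbin l l' :
    (forall i : 'I_m, ~~ (i < n)%N -> (ks i <= l.+1) || (ks i <= l'.+1))%N ->
    (l.+2 <= K)%N -> (l'.+2 <= K)%N ->
  cover_form (sbin R l.+1) (sbin R l'.+1) = 0.
Proof.
move=> ks_small lelK lel'K; have := gradP_coef_eq0 l l'.
rewrite (bigID (fun i : 'I_m => i < n)%N) /= [X in _ + X]big1 ?addr0; last first.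
  move=> i /ks_small small_i; rewrite big1 ?mulr0 // => a _.
  case/orP: small_i => ?; first by rewrite (@coef_dbern_high _ _ a) ?mul0r.
  by rewrite (@coef_dbern_high _ _ (pis i a)) ?mulr0.
rewrite (eq_bigr (fun i => K`!%:R * dbern_scale R K l * dbern_scale R K l' *
  (t i * \sum_(a < ks i) sbin R l.+1 a * sbin R l'.+1 (pis i a)))) => [|i ltin].
  have c_neq0 : K`!%:R * dbern_scale R K l * dbern_scale R K l' != 0.
    by rewrite mulf_neq0 ?dbern_scale_neq0 // mulf_neq0 ?natr_fact_neq0 ?dbern_scale_neq0.
  by rewrite -mulr_sumr => /eqP; rewrite mulf_eq0 (negbTE c_neq0) => /eqP.
have ksiK := ksK ltin.
have fact_ksiK : (ks i)`!%:R = K`!%:R :> R by rewrite ksiK.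
have scale_ksiK j : dbern_scale R (ks i) j = dbern_scale R K j by rewrite ksiK.
have coefs_ksi : \sum_(a < ks i) (dbern R (ks i) a)`_l * (dbern R (ks i) (pis i a))`_l' =
    dbern_scale R K l * dbern_scale R K l' *
    \sum_(a < ks i) sbin R l.+1 a * sbin R l'.+1 (pis i a).
  rewrite mulr_sumr; apply: eq_bigr => a _.
  by rewrite !coef_dbern ?ksiK // !scale_ksiK; ring.
by rewrite coefs_ksi fact_ksiK; ring.
Qed.

Lemma cover_formE (f g : nat -> R) :
  \sum_(l < K) \sum_(j < K) f l * covMx K n pis t l j * g j = cover_form f g.
Proof.
transitivity (\sum_(l < K) \sum_(j < K) \sum_(i < m | (i < n)%N)
    t i * (f l * permMx R K (pis i) l j * g j)).
  apply: eq_bigr => l _; apply: eq_bigr => j _.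
  rewrite summxE mulr_sumr mulr_suml; apply: eq_bigr => i _; rewrite mxE; ring.
under eq_bigr do rewrite exchange_big; rewrite exchange_big; apply: eq_bigr => i ltin.
rewrite -(permMx_bilin (pis i) f g (ksK ltin)) mulr_sumr.
by apply: eq_bigr => l _; rewrite mulr_sumr.
Qed.

Lemma mulmx_bvec_cover_form h (f : nat -> R) : (0 < h)%N ->
  \sum_(l < K) (covMx K n pis t *m bvec R K h) l 0 * f l = cover_form f (sbin R h.-1).
Proof.
move=> h_gt0; rewrite -cover_formE; apply: eq_bigr => l _.
by rewrite mxE mulr_suml; apply: eq_bigr => j _; rewrite bvecE //; ring.
Qed.

Lemma bvec_mulmx_cover_form h (g : nat -> R) : (0 < h)%N ->
  \sum_(j < K) ((bvec R K h)^T *m covMx K n pis t) 0 j * g j = cover_form (sbin R h.-1) g.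
Proof.
move=> h_gt0; rewrite -cover_formE exchange_big; apply: eq_bigr => j _.
by rewrite mxE !mulr_suml; apply: eq_bigr => l _; rewrite mxE bvecE.
Qed.

Lemma cover_form1r (f : nat -> R) : \sum_(a < K) f a = 0 -> cover_form f (fun=> 1) = 0.
Proof.
move=> sum_f0; rewrite /cover_form big1 // => i ltin.
under eq_bigr do rewrite mulr1.
by rewrite (ksK ltin) sum_f0 mulr0.
Qed.

Lemma cover_form1l (g : nat -> R) : \sum_(a < K) g a = 0 -> cover_form (fun=> 1) g = 0.
Proof.
move=> sum_g0; rewrite /cover_form big1 // => i ltin.
under eq_bigr do rewrite mul1r.
rewrite (reindex_inj (@perm_inj _ (pis i)^-1)) /=; under eq_bigr do rewrite permKV.
by rewrite (ksK ltin) sum_g0 mulr0.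
Qed.

End CoverForm.

Theorem lemma9 (R : realType) (m : nat) (ks : 'I_m -> nat)
    (pis : forall i : 'I_m, 'S_(ks i)) (t : 'I_m -> R) (n h : nat) :
  (forall al be : R, 0 < al < 1 -> 0 < be < 1 ->
     \sum_(i < m) t i * gradP (pis i) al be = 0) ->
  (n <= m)%N ->
  (forall i : 'I_m, (i < n)%N = (ks i == maxord ks)) ->
  (2 <= h)%N -> (h <= maxord ks)%N ->
  (forall i : 'I_m, (n <= i)%N -> (ks i <= h.-1)%N) ->
  covMx (maxord ks) n pis t *m bvec R (maxord ks) h = 0 /\
  (bvec R (maxord ks) h)^T *m covMx (maxord ks) n pis t = 0.
Proof.
move=> grad0 _ ks_max h_ge2 le_hK ks_small; set K := maxord ks in ks_max le_hK *.
have ksK (i : 'I_m) : (i < n)%N -> ks i = K by rewrite ks_max => /eqP.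
have h_gt0 : (0 < h)%N by lia.
have sum_b : \sum_(a < K) sbin R h.-1 a = 0 by apply: sum_sbin; lia.
have orth r : (0 < r < K)%N -> cover_form n pis t (sbin R h.-1) (sbin R r) = 0 /\
                               cover_form n pis t (sbin R r) (sbin R h.-1) = 0.
  move=> r_bounds; have [-> ->] : h.-1 = h.-2.+1 /\ r = r.-1.+1 by lia.
  by split; apply: (cover_form_sbin grad0 ksK); try lia; move=> i; have := ks_small i; lia.
split; apply/matrixP => i j; rewrite [RHS]mxE.
- rewrite (ord1 j); move: i; apply: sbin_orthogonal_eq0.
    by move=> r /orth[_ orth_r]; rewrite (mulmx_bvec_cover_form pis t ksK).
  rewrite -[RHS](cover_form1l pis t ksK sum_b).
  by rewrite -(mulmx_bvec_cover_form pis t ksK) //; apply: eq_bigr => l _; rewrite mulr1.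
- rewrite (ord1 i); move: j; apply: sbin_orthogonal_eq0.
    by move=> r /orth[orth_r _]; rewrite (bvec_mulmx_cover_form pis t ksK).
  rewrite -[RHS](cover_form1r pis t ksK sum_b).
  by rewrite -(bvec_mulmx_cover_form pis t ksK) //; apply: eq_bigr => l _; rewrite mulr1.
Qed.
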